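(* Let $h,n\geq2$. (i) If $U\leq G$ is regular maximal, then every $U$-symmetric social preference function $F$ satisfies $G(F)=U$. (ii) Every regular maximal subgroup of $G$ is a symmetry group with respect to $(h,n)$, and every symmetry group with respect to $(h,n)$ is regular. In particular, the set of symmetry groups with respect to $(h,n)$ is nonempty.
   Context: Permutations compose as $(\sigma\tau)(x)=\sigma(\tau(x))$. Let $G=S_h\times S_n$ and $\mathcal{P}=(S_n)^h$ (preference profiles), with $G$ acting by $(p^{(\varphi,\psi)})_i=\psi\,p_{\varphi^{-1}(i)}$. A subgroup $U\leq G$ is regular if for every $p\in\mathcal{P}$, $\mathrm{Stab}_U(p)=\{g\in U:p^g=p\}\subseteq S_h\times\{id\}$; it is regular maximal if it is regular and no regular subgroup of $G$ properly contains it. A social preference function (SPF) is any $F:\mathcal{P}\to S_n$; for $U\leq G$, $F$ is $U$-symmetric if $F(p^{(\varphi,\psi)})=\psi F(p)$ for all $p\in\mathcal{P}$ and $(\varphi,\psi)\in U$. The symmetry group of $F$ is $G(F)=\{(\varphi,\psi)\in G: F(p^{(\varphi,\psi)})=\psi F(p)\ \forall p\}$; $U$ is a symmetry group with respect to $(h,n)$ if $U=G(F)$ for some SPF $F$. *)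

From mathcomp Require Import all_boot all_fingroup.
Set Implicit Arguments. Unset Strict Implicit. Unset Printing Implicit Defensive.
Local Open Scope group_scope.

(* Composition in the paper's convention: (pcomp s t) x = s (t x).
   (In mathcomp, (t * s) x = s (t x).) *)
Definition pcomp (n : nat) (s t : {perm 'I_n}) : {perm 'I_n} := t * s.

Definition Gt (h n : nat) : finGroupType := ({perm 'I_h} * {perm 'I_n})%type.

Definition profile (h n : nat) : finType := {ffun 'I_h -> {perm 'I_n}}.

Definition pact (h n : nat) (p : profile h n) (g : Gt h n) : profile h n :=
  [ffun i => pcomp g.2 (p (g.1^-1 i))].

Definition regular (h n : nat) (U : {set Gt h n}) : Prop :=
  forall (p : profile h n) (g : Gt h n), g \in U -> pact p g = p -> g.2 = 1.

Definition regular_maximal (h n : nat) (U : {group Gt h n}) : Prop :=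
  regular U /\ ~ (exists V : {group Gt h n}, regular V /\ U \proper V).

Definition SPF (h n : nat) := profile h n -> {perm 'I_n}.

Definition symmetric_for (h n : nat) (U : {set Gt h n}) (F : SPF h n) : Prop :=
  forall (p : profile h n) (g : Gt h n), g \in U -> F (pact p g) = pcomp g.2 (F p).

Definition symgroup (h n : nat) (F : SPF h n) : {set Gt h n} :=
  [set g : Gt h n | [forall p : profile h n, F (pact p g) == pcomp g.2 (F p)]].

Definition is_symmetry_group (h n : nat) (U : {set Gt h n}) : Prop :=
  exists F : SPF h n, U = symgroup F.

From Pilot Require Import Defs.
From mathcomp Require Import all_boot all_fingroup.
Set Implicit Arguments. Unset Strict Implicit. Unset Printing Implicit Defensive.
Local Open Scope group_scope.

(* A symmetry group G(F) is regular: if (φ,ψ) ∈ G(F) fixes the profile p, then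
   F p = F(p^(φ,ψ)) = ψ F(p), so ψ = id.  Conversely, for a regular U choose a
   representative r in every U-orbit of profiles and set F(r^(φ,ψ)) := ψ for
   (φ,ψ) ∈ U; regularity says exactly that ψ is determined by r^(φ,ψ), and the
   resulting F is U-symmetric.  A U-symmetric F has U ⊆ G(F), so for a regular
   maximal U the regular group G(F) equals U.  Regular maximal subgroups exist
   since the trivial subgroup is regular and G is finite. *)

Section SymmetryGroups.

Variables h n : nat.
Implicit Types (p q : profile h n) (g k : Gt h n) (F : SPF h n) (U : {group Gt h n}).

Lemma pcompE (s t : {perm 'I_n}) : Defs.pcomp s t = t * s.
Proof. by []. Qed.

Lemma pact1 p : pact p 1 = p.
Proof. by apply/ffunP => i; rewrite ffunE invg1 perm1 pcompE mulg1. Qed.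

Lemma pactM p g k : pact p (g * k) = pact (pact p g) k.
Proof. by apply/ffunP => i; rewrite !ffunE /= invMg permM !pcompE mulgA. Qed.

Definition profile_action := TotalAction pact1 pactM.

Lemma symgroup_group_set F : group_set (symgroup F).
Proof.
apply/group_setP; split.
  by rewrite inE; apply/forallP => p; rewrite pact1 pcompE mulg1.
move=> g k; rewrite !inE => /forallP symg /forallP symk; apply/forallP => p.
by rewrite pactM (eqP (symk _)) (eqP (symg _)) !pcompE mulgA.
Qed.

Canonical symgroup_group F := group (symgroup_group_set F).

Lemma symgroup_regular F : regular (symgroup F).
Proof.
move=> p g; rewrite inE => /forallP /(_ p) /eqP + fix_p.
by rewrite fix_p pcompE -{1}[F p]mulg1 => /mulgI/esym.
Qed.

Lemma symmetric_sub_symgroup (U : {set Gt h n}) F :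
  symmetric_for U F -> U \subset symgroup F.
Proof.
by move=> symF; apply/subsetP => g Ug; rewrite inE; apply/forallP => p; rewrite symF.
Qed.

Lemma regular_maximal_symgroup U F :
  regular_maximal U -> symmetric_for U F -> symgroup F = U.
Proof.
move=> [_ maxU] /symmetric_sub_symgroup sUG.
apply/eqP; rewrite eq_sym eqEproper sUG /=; apply/negP => ltUG.
by apply: maxU; exists (symgroup_group F); split; first exact: symgroup_regular.
Qed.

Section RegularSymmetricSPF.

Variable U : {group Gt h n}.
Hypothesis regU : regular U.

Lemma regular_act_eq2 p g k : g \in U -> k \in U -> pact p g = pact p k -> g.2 = k.2.
Proof.
move=> Ug Uk eq_pgk; apply/eqP; rewrite eq_mulgV1; apply/eqP.
have -> : g.2 * k.2^-1 = (g * k^-1).2 by [].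
by apply: (regU (p := p)); rewrite ?groupM ?groupV // pactM eq_pgk -pactM mulgV pact1.
Qed.

Definition orbit_rep p := odflt p [pick q in orbit profile_action U p].

Lemma orbit_rep_in p : orbit_rep p \in orbit profile_action U p.
Proof. by rewrite /orbit_rep; case: pickP => [q //|/(_ p)]; rewrite orbit_refl. Qed.

Lemma orbit_rep_act p k : k \in U -> orbit_rep (pact p k) = orbit_rep p.
Proof.
move=> Uk; rewrite /orbit_rep -[pact p k]/(profile_action p k) orbit_act //.
by case: pickP => // /(_ p); rewrite orbit_refl.
Qed.

Definition transporter p := odflt 1 [pick g in amove profile_action U (orbit_rep p) p].

Lemma transporterP p : transporter p \in U /\ pact (orbit_rep p) (transporter p) = p.
Proof.
rewrite /transporter; case: pickP => [g|none]; first by rewrite inE => /andP[-> /eqP].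
have /orbitP[g Ug rep_g] : p \in orbit profile_action U (orbit_rep p).
  by rewrite orbit_sym orbit_rep_in.
by have := none g; rewrite inE Ug rep_g eqxx.
Qed.

Definition orbit_spf : SPF h n := fun p => (transporter p).2.

Lemma orbit_spf_symmetric : symmetric_for U orbit_spf.
Proof.
move=> p k Uk; have [Ug rep_g] := transporterP p.
have [Ug' rep_g'] := transporterP (pact p k); rewrite orbit_rep_act // in rep_g'.
rewrite /orbit_spf pcompE -[_ * _]/((transporter p * k).2).
by apply: (regular_act_eq2 (p := orbit_rep p)); rewrite ?groupM // rep_g' pactM rep_g.
Qed.

End RegularSymmetricSPF.

Definition regularb (U : {set Gt h n}) :=
  [forall p, forall g in U, (pact p g == p) ==> (g.2 == 1)].

Lemma regularP (U : {set Gt h n}) : reflect (regular U) (regularb U).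
Proof.
apply: (iffP forallP) => [regU p g Ug /eqP fix_p | regU p].
  by have /forall_inP/(_ g Ug)/implyP/(_ fix_p)/eqP := regU p.
by apply/forall_inP => g Ug; apply/implyP => /eqP/(regU p g Ug)->.
Qed.

Lemma regular_maximal_exists : exists U, regular_maximal U.
Proof.
have reg1 : regularb [1 (Gt h n)].
  by apply/regularP => p g; rewrite inE => /eqP-> _.
have [U /maxgroupP[/regularP regU maxU] _] := maxgroup_exists (gP := regularb) reg1.
exists U; split=> // -[V [/regularP regV /andP[sUV sVU]]].
by move: sVU; rewrite (maxU V regV sUV) subxx.
Qed.

Lemma regular_maximal_is_symmetry_group U : regular_maximal U -> is_symmetry_group U.
Proof.
move=> maxU; exists (orbit_spf U).
by rewrite (regular_maximal_symgroup maxU) //; apply/orbit_spf_symmetric/(proj1 maxU).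
Qed.

End SymmetryGroups.

Theorem mainTheorem10 (h n : nat) (hh : 2 <= h) (hn : 2 <= n) :
  (forall U : {group Gt h n}, regular_maximal U ->
     forall F : SPF h n, symmetric_for U F -> symgroup F = U)
  /\ (forall U : {group Gt h n}, regular_maximal U -> is_symmetry_group U)
  /\ (forall U : {group Gt h n}, is_symmetry_group U -> regular U)
  /\ (exists U : {group Gt h n}, is_symmetry_group U).
Proof.
split; first by move=> U maxU F; apply: regular_maximal_symgroup.
split; first exact: regular_maximal_is_symmetry_group.
split; first by move=> U [F ->]; apply: symgroup_regular.
by have [U maxU] := regular_maximal_exists h n; exists U; apply: regular_maximal_is_symmetry_group.
Qed.
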